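(* Let $\alpha>-1$ and for $i=1,2,3,\ldots$ define the polynomials $$a_i(x)=\frac{1}{i!}\sum_{j=1}^i(-1)^{i+j+1}\binom{\alpha+1}{j-1}\binom{\alpha+2}{i-j}(\alpha+3)_{i-j}\,x^j .$$ Then for every real $x$, $$\sum_{i=1}^{\infty}a_i(x)=-\frac{\sin\pi\alpha}{\pi}\,\frac{x}{(\alpha+2)(\alpha+3)}\;{}_1F_1\!\left(\begin{matrix}1\\ \alpha+4\end{matrix};-x\right).$$ Moreover, if $\alpha\in\{0,1,2,\ldots\}$, then for every $k=1,2,3,\ldots$ $$\sum_{i=k}^{\infty}\binom{i}{k}a_i(x)=(-1)^{\alpha+k}a_k(-x);$$ in particular, for such $\alpha$, $\sum_{i=1}^\infty a_i(x)=0$ and $\sum_{i=1}^\infty i\,a_i(x)=(-1)^{\alpha+1}x$.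
   Context: $(a)_0=1$, $(a)_k=a(a+1)\cdots(a+k-1)$ is the Pochhammer symbol; $\binom{\gamma}{m}=\frac{\gamma(\gamma-1)\cdots(\gamma-m+1)}{m!}$ denotes the generalized binomial coefficient for real $\gamma$ and nonnegative integer $m$. ${}_pF_q$ denotes the generalized hypergeometric series $\sum_{k\ge0}\frac{(a_1)_k\cdots(a_p)_k}{(b_1)_k\cdots(b_q)_k}\frac{z^k}{k!}$. (These $a_i$ are the coefficients of the infinite-order differential equation $M\sum_{i\ge0}a_i(x)y^{(i)}(x)+xy''(x)+(\alpha+1-x)y'(x)+ny(x)=0$ satisfied by Koornwinder's generalized Laguerre polynomials orthogonal w.r.t. $\frac{1}{\Gamma(\alpha+1)}x^\alpha e^{-x}+M\delta(x)$.) *)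

From Stdlib Require Import Reals.
From Coquelicot Require Import Coquelicot.
Open Scope R_scope.

Fixpoint poch (a : R) (k : nat) : R :=
  match k with
  | O => 1
  | S k' => poch a k' * (a + INR k')
  end.

Fixpoint falling (g : R) (m : nat) : R :=
  match m with
  | O => 1
  | S m' => falling g m' * (g - INR m')
  end.

Definition gbinom (g : R) (m : nat) : R := falling g m / INR (Factorial.fact m).

Fixpoint sum1 (n : nat) (f : nat -> R) : R :=
  match n with
  | O => 0
  | S n' => sum1 n' f + f (S n')
  end.

Definition a_coef (alpha : R) (i : nat) (x : R) : R :=
  / INR (Factorial.fact i) *
  sum1 i (fun j => (-1) ^ (i + j + 1) * gbinom (alpha + 1) (j - 1)
                   * gbinom (alpha + 2) (i - j) * poch (alpha + 3) (i - j) * x ^ j).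

Definition hyp1F1 (a b z : R) : R :=
  Series (fun k => poch a k / poch b k * z ^ k / INR (Factorial.fact k)).

(* For alpha > -1 write a_i(x) = sum_j x^j u_j(i - j), where
   u_j(m) = binom(alpha+1, j-1) (-1)^(m+1) binom(alpha+2, m) (alpha+3)_m / (j+m)!.
   Each column sum_m u_j(m) telescopes (Gosper): the M-th partial sum of column 1
   is -M (M+1) u_1(M) / ((alpha+2)(alpha+3)), and M (M+1) u_1(M) is a partial Euler
   product alpha prod_n (1 - alpha^2/n^2) times a rational factor tending to 1;
   column j+1 is tied to column j by a second telescoping identity.  Hence
   sum_m u_j(m) = sin(pi alpha)/pi (-1)^j / (alpha+2)_(j+1).  Since
   |u_(j+1)(m)| <= c_j / (m (m+1)) with sum_j c_j |x|^j < oo, the double series may be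
   summed by columns, and sum_j x^j (-1)^j / (alpha+2)_(j+1) is the 1F1 series.
   Euler's product itself comes from the Wallis-type integrals
   int_0^(pi/2) cos(b t) cos^n t dt.

   For alpha = m a natural number the generating polynomial sum_l a_l(x) s^l equals
   (-1)^m sum_l a_l(-x) (1-s)^l, because its j-th column is a multiple of the
   (m+2-j)-th derivative of s^(m+2) (1-s)^(m+2); comparing the Taylor coefficients
   at s = 1 with those at s = 0 gives the binomial sums. *)

From Stdlib Require Import Reals.
From Coquelicot Require Import Coquelicot.
From Stdlib Require Import Lra Lia.
Open Scope R_scope.

Ltac rring := match goal with |- ?a = ?b => change (@eq R a b) end; ring.

Fixpoint sumlt (M : nat) (f : nat -> R) : R :=
  match M with O => 0 | S M' => sumlt M' f + f M' end.

Lemma sumlt_S n f : sumlt (S n) f = sumlt n f + f n.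
Proof. reflexivity. Qed.

Lemma sum_n_sumlt (f : nat -> R) n : sum_n f n = sumlt (S n) f.
Proof.
  induction n. rewrite sum_O. simpl. ring.
  rewrite sum_Sn, IHn. reflexivity.
Qed.

Lemma sumlt_ext n f g : (forall m, f m = g m) -> sumlt n f = sumlt n g.
Proof. intros H; induction n; simpl; auto. rewrite IHn, H; auto. Qed.

Lemma sumlt_scal n c f : sumlt n (fun m => c * f m) = c * sumlt n f.
Proof. induction n; simpl. ring. rewrite IHn. ring. Qed.

Lemma sum1_S n f : sum1 (S n) f = sum1 n f + f (S n).
Proof. reflexivity. Qed.

Lemma sum1_ext n f g : (forall j, (1 <= j <= n)%nat -> f j = g j) -> sum1 n f = sum1 n g.
Proof. intros H; induction n; simpl; auto. rewrite IHn, H; auto; try lia. intros; apply H; lia. Qed.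

Lemma sum1_plus n f g : sum1 n (fun j => f j + g j) = sum1 n f + sum1 n g.
Proof. induction n; simpl. ring. rewrite IHn. ring. Qed.

Lemma sum1_scal n c f : sum1 n (fun j => c * f j) = c * sum1 n f.
Proof. induction n; simpl. ring. rewrite IHn. ring. Qed.

Lemma sum1_minus n f g : sum1 n (fun j => f j - g j) = sum1 n f - sum1 n g.
Proof. induction n; simpl. ring. rewrite IHn. ring. Qed.

Lemma sum1_abs n f : Rabs (sum1 n f) <= sum1 n (fun j => Rabs (f j)).
Proof. induction n; simpl. rewrite Rabs_R0; lra.
  eapply Rle_trans. apply Rabs_triang. lra. Qed.

Lemma sum1_le n f g : (forall j, (1 <= j <= n)%nat -> f j <= g j) -> sum1 n f <= sum1 n g.
Proof. intros H; induction n; simpl. lra.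
  apply Rplus_le_compat. apply IHn; intros; apply H; lia. apply H; lia. Qed.

Lemma sum1_trunc p k F :
  (k <= p)%nat -> (forall j, (k < j <= p)%nat -> F j = 0) -> sum1 p F = sum1 k F.
Proof.
  intros Hkp H. induction Hkp. reflexivity.
  rewrite sum1_S, IHHkp. rewrite H by lia. ring. intros; apply H; lia.
Qed.

Lemma sum_n_sum1 (f : nat -> R) N : sum_n (fun i => f (S i)) N = sum1 (S N) f.
Proof.
  induction N. rewrite sum_O. simpl. ring.
  rewrite sum_Sn, IHN. reflexivity.
Qed.

Lemma sumlt_sum1_swap N K (F : nat -> nat -> R) :
  sumlt N (fun l => sum1 K (fun j => F j l)) = sum1 K (fun j => sumlt N (fun l => F j l)).
Proof.
  induction K. simpl. clear. induction N; simpl; auto. rewrite IHN; ring.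
  simpl sum1. rewrite <- IHK. clear. induction N; simpl. ring. rewrite IHN. ring.
Qed.

Lemma pow_m1_add n m : (-1) ^ (n + 2 * m) = (-1) ^ n.
Proof. rewrite pow_add, pow_mult. replace ((-1) ^ 2) with 1 by ring. rewrite pow1. ring. Qed.

Lemma pow_opp_m1 x n : (- x) ^ n = (-1) ^ n * x ^ n.
Proof. rewrite <- Rpow_mult_distr. f_equal. ring. Qed.

Lemma fact_pos_R n : 0 < INR (Factorial.fact n).
Proof. apply lt_0_INR, Factorial.lt_O_fact. Qed.

Lemma INR_fact_S n : INR (Factorial.fact (S n)) = (INR n + 1) * INR (Factorial.fact n).
Proof. rewrite fact_simpl, mult_INR, S_INR. reflexivity. Qed.

Lemma pow2_ge j : INR j + 1 <= 2 ^ j.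
Proof. induction j. simpl; lra. rewrite S_INR. simpl. pose proof (pos_INR j). lra. Qed.

Lemma is_lim_seq_affine_p_infty d e : 0 < d -> is_lim_seq (fun k => d * INR k + e) p_infty.
Proof.
  intros Hd.
  eapply is_lim_seq_plus. apply is_lim_seq_scal_l, is_lim_seq_INR. apply is_lim_seq_const.
  simpl. case (Rle_dec 0 d); intro H; [|lra]. case (Rle_lt_or_eq_dec 0 d H); intro H'; [|lra].
  simpl. constructor.
Qed.

Lemma is_lim_seq_div_affine c d e : 0 < d -> is_lim_seq (fun k => c / (d * INR k + e)) 0.
Proof.
  intros Hd. replace (Finite 0) with (Rbar_mult c (Rbar_inv p_infty)) by (simpl; f_equal; ring).
  apply is_lim_seq_scal_l. apply is_lim_seq_inv. apply is_lim_seq_affine_p_infty; auto.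
  discriminate.
Qed.

Lemma is_lim_seq_abs_le (u : nat -> R) (l : R) d N :
  is_lim_seq u l -> (forall n, (N <= n)%nat -> Rabs (u n) <= d) -> Rabs l <= d.
Proof.
  intros Hu Hb.
  assert (H := is_lim_seq_le_loc (fun n => Rabs (u n)) (fun _ => d) (Rbar_abs l) d).
  simpl in H. apply H. exists N. auto. apply (is_lim_seq_abs _ l); auto. apply is_lim_seq_const.
Qed.

Lemma is_series_nonneg_sum_n_le (a : nat -> R) (l : R) N :
  is_series a l -> (forall n, 0 <= a n) -> sum_n a N <= l.
Proof.
  intros Ha Hp.
  assert (HL : is_lim_seq (sum_n a) l) by exact Ha.
  assert (H := is_lim_seq_le_loc (fun _ => sum_n a N) (sum_n a) (sum_n a N) l).
  simpl in H. apply H. exists N. intros n Hn.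
  induction Hn. lra. rewrite sum_Sn. unfold plus; simpl. specialize (Hp (S m)). lra.
  apply is_lim_seq_const. auto.
Qed.

Lemma sum1_exp_le y N : 0 <= y -> sum1 N (fun j => y ^ j / INR (Factorial.fact j)) <= exp y.
Proof.
  intros Hy.
  assert (H : is_series (fun k => y ^ k / INR (Factorial.fact k)) (exp y))
    by exact (is_exp_Reals y).
  eapply Rle_trans. 2: apply (is_series_nonneg_sum_n_le _ _ N H).
  2: { intro n. apply Rmult_le_pos. apply pow_le; auto.
       apply Rlt_le, Rinv_0_lt_compat, fact_pos_R. }
  clear. induction N. rewrite sum_O. simpl. unfold Rdiv. simpl. lra.
  rewrite sum1_S, sum_Sn. unfold plus; simpl. lra.
Qed.

Lemma is_series_of_lim_seq (a : nat -> R) (l : R) : is_lim_seq (sum_n a) l -> is_series a l.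
Proof. exact (fun H => H). Qed.

Lemma is_series_finite (a : nat -> R) N :
  (forall n, (N < n)%nat -> a n = 0) -> is_series a (sum_n a N).
Proof.
  intros H.
  assert (HL : is_lim_seq (sum_n a) (sum_n a N)).
  { apply is_lim_seq_ext_loc with (u := fun _ => sum_n a N).
    exists N. intros n Hn. induction Hn. reflexivity.
    rewrite sum_Sn, <- IHHn, H by lia. unfold plus; simpl. symmetry; apply Rplus_0_r.
    apply is_lim_seq_const. }
  exact HL.
Qed.

Lemma CV_radius_finite (a : nat -> R) N : (forall n, (N < n)%nat -> a n = 0) ->
  forall s, Rbar_lt (Rabs s) (CV_radius a).
Proof.
  intros H s.
  assert (Hd : CV_disk a (Rabs s + 1)).
  { exists (sum_n (fun k => Rabs (a k * (Rabs s + 1) ^ k)) N). apply is_series_finite.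
    intros n Hn. rewrite H by auto. rewrite Rmult_0_l, Rabs_R0. reflexivity. }
  pose proof (Lub_Rbar_correct (CV_disk a)) as [Hub _].
  specialize (Hub _ Hd). unfold CV_radius.
  destruct (Lub_Rbar (CV_disk a)); simpl in *; auto. lra.
Qed.

Lemma PSeries_finite (a : nat -> R) N s : (forall n, (N < n)%nat -> a n = 0) ->
  PSeries a s = sum_n (fun k => a k * s ^ k) N.
Proof.
  intros H. unfold PSeries. apply is_series_unique. apply is_series_finite.
  intros n Hn. rewrite H by auto. ring.
Qed.

Lemma Derive_n_comp_one_minus (f : R -> R) d s :
  (forall k y, ex_derive_n f k y) ->
  Derive_n (fun t => f (1 - t)) d s = (-1) ^ d * Derive_n f d (1 - s).
Proof.
  intros Hf.
  rewrite (Derive_n_ext _ (fun t => (fun y => f (y + 1)) (- t))).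
  2: { intro t. f_equal. ring. }
  rewrite (Derive_n_comp_opp (fun y => f (y + 1))).
  - rewrite (Derive_n_comp_trans f). f_equal. f_equal. ring.
  - apply filter_forall. intros y k _. apply ex_derive_n_comp_trans. apply Hf.
Qed.

Lemma poch_S a k : poch a (S k) = poch a k * (a + INR k).
Proof. reflexivity. Qed.

Lemma poch_shift a k : poch a (S k) = a * poch (a + 1) k.
Proof.
  induction k. simpl. ring.
  rewrite poch_S, IHk, poch_S, S_INR. ring.
Qed.

Lemma poch1 k : poch 1 k = INR (Factorial.fact k).
Proof. induction k. reflexivity. rewrite poch_S, IHk, INR_fact_S. ring. Qed.

Lemma poch_ge_fact a k : 1 <= a -> INR (Factorial.fact k) <= poch a k.
Proof.
  intros Ha. induction k. simpl; lra.
  rewrite poch_S, INR_fact_S. pose proof (pos_INR k). pose proof (fact_pos_R k).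
  rewrite Rmult_comm. apply Rmult_le_compat; lra.
Qed.

Lemma poch_pos a k : 0 < a -> 0 < poch a k.
Proof.
  intros Ha. induction k. simpl. lra.
  rewrite poch_S. pose proof (pos_INR k). apply Rmult_lt_0_compat; lra.
Qed.

Lemma poch_INR_fact p q :
  poch (INR p + 1) q * INR (Factorial.fact p) = INR (Factorial.fact (p + q)).
Proof.
  induction q. simpl. rewrite Nat.add_0_r. ring.
  rewrite poch_S. replace (p + S q)%nat with (S (p + q)) by lia.
  rewrite INR_fact_S, <- IHq, plus_INR. ring.
Qed.

Lemma gbinom_0 g : gbinom g 0 = 1.
Proof. unfold gbinom. simpl. field. Qed.

Lemma gbinom_S g m : gbinom g (S m) = gbinom g m * (g - INR m) / (INR m + 1).
Proof.
  unfold gbinom. simpl falling. rewrite INR_fact_S. pose proof (fact_pos_R m).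
  pose proof (pos_INR m). field. lra.
Qed.

Lemma falling_INR_gt p k : (p < k)%nat -> falling (INR p) k = 0.
Proof.
  intros H. induction H.
  - simpl. unfold Rminus. rewrite Rplus_opp_r. ring.
  - simpl. rewrite IHle. ring.
Qed.

Lemma gbinom_INR_gt p k : (p < k)%nat -> gbinom (INR p) k = 0.
Proof. intros H. unfold gbinom. rewrite falling_INR_gt by auto. unfold Rdiv. ring. Qed.

Lemma falling_INR_fact n i : (i <= n)%nat ->
  falling (INR n) i * INR (Factorial.fact (n - i)) = INR (Factorial.fact n).
Proof.
  induction i; intros H.
  - simpl. rewrite Nat.sub_0_r. ring.
  - simpl falling. rewrite <- IHi by lia.
    replace (n - i)%nat with (S (n - S i)) by lia. rewrite INR_fact_S.
    rewrite minus_INR by lia. rewrite S_INR. ring.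
Qed.

Lemma C_gbinom n i : (i <= n)%nat -> Binomial.C n i = gbinom (INR n) i.
Proof.
  intros H. unfold Binomial.C, gbinom. rewrite <- (falling_INR_fact n i H).
  pose proof (fact_pos_R i). pose proof (fact_pos_R (n - i)). field. lra.
Qed.

Lemma C_S_1 n : Binomial.C (S n) 1 = INR (S n).
Proof.
  unfold Binomial.C. simpl (S n - 1)%nat. rewrite Nat.sub_0_r, INR_fact_S, S_INR.
  pose proof (fact_pos_R n). simpl. field. lra.
Qed.

Lemma gbinom_abs_le g k : Rabs (gbinom g k) <= (Rabs g + 1) ^ k.
Proof.
  induction k.
  - rewrite gbinom_0, Rabs_R1. simpl. lra.
  - rewrite gbinom_S. pose proof (pos_INR k).
    unfold Rdiv. rewrite !Rabs_mult, Rabs_inv, (Rabs_right (INR k + 1)) by lra.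
    simpl. pose proof (Rabs_pos g).
    assert (Rabs (g - INR k) <= Rabs g + INR k).
    { unfold Rminus. eapply Rle_trans. apply Rabs_triang.
      rewrite Rabs_Ropp, (Rabs_right (INR k)); lra. }
    assert (Rabs (g - INR k) * / (INR k + 1) <= Rabs g + 1).
    { apply Rmult_le_reg_r with (INR k + 1). lra.
      rewrite Rmult_assoc, Rinv_l, Rmult_1_r by lra. nra. }
    pose proof (Rabs_pos (gbinom g k)). pose proof (Rabs_pos (g - INR k)).
    assert (0 <= / (INR k + 1)) by (apply Rlt_le, Rinv_0_lt_compat; lra).
    rewrite Rmult_assoc. rewrite (Rmult_comm (Rabs g + 1)).
    apply Rmult_le_compat; auto. apply Rmult_le_pos; auto.
Qed.

Lemma a_coef_1 al y : a_coef al 1 y = - y.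
Proof. unfold a_coef. simpl. rewrite !gbinom_0. field. Qed.


(** * Euler's product for the sine *)

Lemma RInt_minus_R (f g : R -> R) a b : ex_RInt f a b -> ex_RInt g a b ->
  RInt (fun t => f t - g t) a b = RInt f a b - RInt g a b.
Proof.
  intros Hf Hg. apply is_RInt_unique.
  apply (is_RInt_ext (fun t => minus (f t) (g t))).
  { intros; reflexivity. }
  apply (@is_RInt_minus R_NormedModule); apply (@RInt_correct R_CompleteNormedModule); auto.
Qed.

Lemma RInt_scal_R (f : R -> R) k a b : ex_RInt f a b ->
  RInt (fun t => k * f t) a b = k * RInt f a b.
Proof.
  intros Hf. apply is_RInt_unique.
  apply (is_RInt_ext (fun t => scal k (f t))).
  { intros; reflexivity. }
  apply (@is_RInt_scal R_NormedModule); apply (@RInt_correct R_CompleteNormedModule); auto.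
Qed.

Lemma ex_RInt_minus_R (f g : R -> R) a b : ex_RInt f a b -> ex_RInt g a b ->
  ex_RInt (fun t => f t - g t) a b.
Proof.
  intros. apply (ex_RInt_ext (fun t => minus (f t) (g t))). intros; reflexivity.
  apply (@ex_RInt_minus R_NormedModule); auto.
Qed.

Lemma ex_RInt_scal_R (f : R -> R) k a b : ex_RInt f a b ->
  ex_RInt (fun t => k * f t) a b.
Proof.
  intros. apply (ex_RInt_ext (fun t => scal k (f t))). intros; reflexivity.
  apply (@ex_RInt_scal R_NormedModule); auto.
Qed.

Lemma cos_pos_half t : 0 < t < PI / 2 -> 0 < cos t.
Proof. intros [H1 H2]. apply cos_gt_0; lra. Qed.

Lemma sin_sq_le u : sin u * sin u <= u * u.
Proof.
  assert (Hle : forall v, 0 <= v -> sin v <= v).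
  { intros v Hv. destruct (Req_dec v 0) as [->|Hn]. rewrite sin_0; lra.
    pose proof (sin_gt_x (- v)). rewrite sin_neg in H. lra. }
  assert (forall v, 0 <= v -> sin v * sin v <= v * v).
  { intros v Hv. pose proof (Hle v Hv).
    assert (- v <= sin v).
    { destruct (Rle_lt_dec 1 v). pose proof (SIN_bound v); lra.
      assert (0 <= sin v) by (apply sin_ge_0; pose proof PI2_1; lra). lra. }
    nra. }
  destruct (Rle_lt_dec 0 u). auto.
  specialize (H (- u)). rewrite sin_neg in H. nra.
Qed.

Lemma one_minus_cos_bounds y : 0 <= 1 - cos y <= y * y / 2.
Proof.
  assert (E : cos y = 1 - 2 * sin (y / 2) * sin (y / 2)).
  { rewrite <- cos_2a_sin. f_equal. field. }
  rewrite E. pose proof (sin_sq_le (y / 2)). split; nra.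
Qed.

Lemma t_cos_le_sin t : 0 <= t <= PI -> t * cos t <= sin t.
Proof.
  intros Ht.
  assert (H : is_RInt (fun u => u * sin u) 0 t ((sin t - t * cos t) - (sin 0 - 0 * cos 0))).
  { apply (is_RInt_derive (fun u => sin u - u * cos u)).
    - intros u _. auto_derive; auto. ring.
    - intros u _. apply (@ex_derive_continuous R_AbsRing R_NormedModule). auto_derive. auto. }
  rewrite sin_0 in H.
  assert (0 <= RInt (fun u => u * sin u) 0 t).
  { apply RInt_ge_0. lra. eexists; eauto. intros u Hu. apply Rmult_le_pos. lra.
    apply sin_ge_0; lra. }
  rewrite (is_RInt_unique _ _ _ _ H) in H0. lra.
Qed.

Lemma one_minus_cos_mul_cos_sq_le b t : 0 <= t <= PI / 2 ->
  (1 - cos (b * t)) * (cos t * cos t) <= b * b / 2 * (sin t * sin t).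
Proof.
  intros Ht. pose proof PI2_Rlt_PI.
  pose proof (one_minus_cos_bounds (b * t)) as [H1 H2].
  pose proof (t_cos_le_sin t ltac:(lra)) as H3.
  assert (Hc : 0 <= cos t) by (apply cos_ge_0; lra).
  assert (0 <= t * cos t) by (apply Rmult_le_pos; lra).
  assert (t * t * (cos t * cos t) <= sin t * sin t) by nra.
  apply Rle_trans with (b * t * (b * t) / 2 * (cos t * cos t)). nra.
  replace (b * t * (b * t) / 2 * (cos t * cos t)) with (b * b / 2 * (t * t * (cos t * cos t)))
    by field.
  apply Rmult_le_compat_l; nra.
Qed.

Definition cos_pow_int (n : nat) (b : R) : R :=
  RInt (fun t => cos (b * t) * cos t ^ n) 0 (PI / 2).

Lemma ex_RInt_cos_pow n b : ex_RInt (fun t => cos (b * t) * cos t ^ n) 0 (PI / 2).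
Proof.
  apply (ex_RInt_continuous (V:=R_CompleteNormedModule)). intros z _.
  apply (@ex_derive_continuous R_AbsRing R_NormedModule). auto_derive. auto.
Qed.

(* F below vanishes at 0 and pi/2, and its derivative is the difference of the two sides. *)
Lemma cos_pow_int_rec n b :
  ((INR n + 2) ^ 2 - b ^ 2) * cos_pow_int (S (S n)) b
  = (INR n + 2) * (INR n + 1) * cos_pow_int n b.
Proof.
  set (F := fun t => cos t ^ (S n) * (b * sin (b * t) * cos t - (INR n + 2) * cos (b * t) * sin t)).
  set (f := fun t => (INR n + 2) * (INR n + 1) * (cos (b * t) * cos t ^ n)
                    - ((INR n + 2) ^ 2 - b ^ 2) * (cos (b * t) * cos t ^ (S (S n)))).
  assert (Hd : forall t, is_derive F t (f t)).
  { intro t. unfold F, f. auto_derive; auto.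
    replace (match n with | 0%nat => 1 | S _ => INR n + 1 end) with (INR n + 1)
      by (destruct n; simpl; lra).
    simpl. pose proof (sin2 t) as Hs. unfold Rsqr in Hs.
    apply Rminus_diag_uniq.
    match goal with |- ?u - ?v = 0 =>
      replace (u - v) with ((INR n + 1) * (INR n + 2) * cos t ^ n * cos (b * t)
                             * (sin t * sin t - (1 - cos t * cos t))) by ring end.
    rewrite Hs. ring. }
  assert (HI : is_RInt f 0 (PI / 2) (F (PI / 2) - F 0)).
  { apply (is_RInt_derive F f).
    - intros t _. apply Hd.
    - intros t _. unfold f.
      apply (@ex_derive_continuous R_AbsRing R_NormedModule); auto_derive; auto. }
  assert (HF : F (PI / 2) - F 0 = 0).
  { unfold F. rewrite cos_PI2, !Rmult_0_r, sin_0. simpl. rewrite !Rmult_0_l, Rmult_0_r. lra. }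
  rewrite HF in HI. pose proof (is_RInt_unique _ _ _ _ HI) as HR.
  unfold f in HR.
  rewrite (RInt_minus_R (fun t => (INR n + 2) * (INR n + 1) * (cos (b * t) * cos t ^ n))
             (fun t => ((INR n + 2) ^ 2 - b ^ 2) * (cos (b * t) * cos t ^ S (S n))))
    in HR by (apply ex_RInt_scal_R, ex_RInt_cos_pow).
  rewrite !RInt_scal_R in HR by apply ex_RInt_cos_pow.
  unfold cos_pow_int. lra.
Qed.

Lemma cos_pow_int_0 b : b * cos_pow_int 0 b = sin (b * (PI / 2)).
Proof.
  assert (H : is_RInt (fun t => b * cos (b * t)) 0 (PI / 2)
                (sin (b * (PI / 2)) - sin (b * 0))).
  { apply (is_RInt_derive (fun t => sin (b * t))).
    - intros t _. auto_derive; auto. ring.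
    - intros t _. apply (@ex_derive_continuous R_AbsRing R_NormedModule). auto_derive. auto. }
  rewrite Rmult_0_r, sin_0, Rminus_0_r in H.
  rewrite <- (is_RInt_unique _ _ _ _ H).
  unfold cos_pow_int. rewrite <- RInt_scal_R by apply ex_RInt_cos_pow.
  apply RInt_ext. intros; simpl; ring.
Qed.

Lemma cos_pow_int_0_0 : cos_pow_int 0 0 = PI / 2.
Proof.
  unfold cos_pow_int. rewrite (RInt_ext _ (fun _ => 1)).
  2: { intros; rewrite Rmult_0_l, cos_0; simpl; ring. }
  rewrite RInt_const. unfold scal; simpl; unfold mult; simpl. ring.
Qed.

Lemma cos_pow_int_pos n : 0 < cos_pow_int n 0.
Proof.
  unfold cos_pow_int. apply RInt_gt_0.
  - pose proof PI_RGT_0; lra.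
  - intros t Ht. rewrite Rmult_0_l, cos_0, Rmult_1_l. apply pow_lt, cos_pos_half; auto.
  - intros t _. apply (@ex_derive_continuous R_AbsRing R_NormedModule). auto_derive. auto.
Qed.

Lemma cos_pow_int_diff_bounds n b :
  0 <= cos_pow_int (S (S n)) 0 - cos_pow_int (S (S n)) b
    <= b * b / 2 * (cos_pow_int n 0 - cos_pow_int (S (S n)) 0).
Proof.
  pose proof PI2_RGT_0 as Hp.
  set (g := fun t => (1 - cos (b * t)) * cos t ^ (S (S n))).
  set (h := fun t => b * b / 2 * (cos (0 * t) * cos t ^ n - cos (0 * t) * cos t ^ (S (S n)))).
  assert (Eg : cos_pow_int (S (S n)) 0 - cos_pow_int (S (S n)) b = RInt g 0 (PI / 2)).
  { unfold cos_pow_int. rewrite <- RInt_minus_R by apply ex_RInt_cos_pow.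
    apply RInt_ext. intros. unfold g. rewrite Rmult_0_l, cos_0. rring. }
  assert (Hg : ex_RInt g 0 (PI / 2)).
  { apply (ex_RInt_ext (fun t => cos (0 * t) * cos t ^ (S (S n))
                                 - cos (b * t) * cos t ^ (S (S n)))).
    intros; unfold g; rewrite Rmult_0_l, cos_0; rring.
    apply ex_RInt_minus_R; apply ex_RInt_cos_pow. }
  assert (Hh : ex_RInt h 0 (PI / 2)).
  { apply ex_RInt_scal_R, ex_RInt_minus_R; apply ex_RInt_cos_pow. }
  assert (Eh : b * b / 2 * (cos_pow_int n 0 - cos_pow_int (S (S n)) 0) = RInt h 0 (PI / 2)).
  { unfold cos_pow_int, h. rewrite RInt_scal_R, RInt_minus_R; auto using ex_RInt_cos_pow.
    apply ex_RInt_minus_R; apply ex_RInt_cos_pow. }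
  rewrite Eg, Eh. split.
  - apply RInt_ge_0; auto. lra. intros t Ht. unfold g.
    apply Rmult_le_pos. apply one_minus_cos_bounds. apply pow_le. left; apply cos_pos_half. lra.
  - apply RInt_le; auto. lra.
    intros t Ht. unfold g, h. rewrite Rmult_0_l, cos_0.
    pose proof (one_minus_cos_mul_cos_sq_le b t ltac:(lra)).
    pose proof (sin2 t) as Hs. unfold Rsqr in Hs.
    assert (Hcn : 0 <= cos t ^ n) by (apply pow_le; left; apply cos_pos_half; lra).
    replace (cos t ^ S (S n)) with (cos t * cos t * cos t ^ n) by (simpl; ring).
    replace (1 * cos t ^ n - 1 * (cos t * cos t * cos t ^ n))
      with ((1 - cos t * cos t) * cos t ^ n) by ring.
    rewrite <- Hs. nra.
Qed.

Fixpoint sine_prod (a : R) (k : nat) : R :=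
  match k with O => 1 | S k' => sine_prod a k' * (1 - a ^ 2 / (INR (S k')) ^ 2) end.

Lemma sine_prod_S a k : sine_prod a (S k) = sine_prod a k * (1 - a ^ 2 / (INR (S k)) ^ 2).
Proof. reflexivity. Qed.

Lemma sine_prod_0 k : sine_prod 0 k = 1.
Proof. induction k; auto. rewrite sine_prod_S, IHk. field. apply not_0_INR. lia. Qed.

Lemma cos_pow_int_even a k :
  cos_pow_int (2 * k) (2 * a) * (4 ^ k * INR (Factorial.fact k) ^ 2 * sine_prod a k)
  = INR (Factorial.fact (2 * k)) * cos_pow_int 0 (2 * a).
Proof.
  induction k.
  - simpl. ring.
  - replace (2 * S k)%nat with (S (S (2 * k))) by lia.
    pose proof (cos_pow_int_rec (2 * k) (2 * a)) as H.
    rewrite mult_INR in H. replace (INR 2) with 2 in H by (simpl; ring).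
    transitivity (((2 * INR k + 2) ^ 2 - (2 * a) ^ 2) * cos_pow_int (S (S (2 * k))) (2 * a)
                  * (4 ^ k * INR (Factorial.fact k) ^ 2 * sine_prod a k)).
    { rewrite sine_prod_S, INR_fact_S, S_INR. pose proof (pos_INR k). simpl pow. field. lra. }
    rewrite H.
    transitivity ((2 * INR k + 2) * (2 * INR k + 1) * (cos_pow_int (2 * k) (2 * a)
                  * (4 ^ k * INR (Factorial.fact k) ^ 2 * sine_prod a k))). ring.
    rewrite IHk, !INR_fact_S, S_INR, mult_INR. replace (INR 2) with 2 by (simpl; ring). ring.
Qed.

Lemma sine_prod_cos_pow_int a k :
  a * sine_prod a k * cos_pow_int (2 * k) (2 * a) * PI = sin (PI * a) * cos_pow_int (2 * k) 0.
Proof.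
  pose proof (cos_pow_int_even a k) as h1.
  pose proof (cos_pow_int_even 0 k) as h2. rewrite sine_prod_0, Rmult_0_r, cos_pow_int_0_0 in h2.
  pose proof (cos_pow_int_0 (2 * a)) as h3.
  replace (2 * a * (PI / 2)) with (PI * a) in h3 by field.
  set (X := 4 ^ k * INR (Factorial.fact k) ^ 2) in *.
  assert (HX : X <> 0).
  { unfold X. apply Rmult_integral_contrapositive. split. apply pow_nonzero. lra.
    apply pow_nonzero. apply not_0_INR. apply Factorial.fact_neq_0. }
  apply (Rmult_eq_reg_r X); auto.
  transitivity (a * PI * (cos_pow_int (2 * k) (2 * a) * (X * sine_prod a k))). ring.
  rewrite h1. rewrite Rmult_1_r in h2.
  transitivity (sin (PI * a) * (cos_pow_int (2 * k) 0 * X)). 2: ring.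
  rewrite h2, <- h3. field.
Qed.

Lemma cos_pow_int_ratio_bounds a k :
  1 - 2 * (a * a) / (2 * INR k + 1)
    <= cos_pow_int (2 * S k) (2 * a) / cos_pow_int (2 * S k) 0 <= 1.
Proof.
  replace (2 * S k)%nat with (S (S (2 * k))) by lia.
  set (I0 := cos_pow_int (S (S (2 * k))) 0).
  pose proof (cos_pow_int_diff_bounds (2 * k) (2 * a)) as [d1 d2].
  pose proof (cos_pow_int_rec (2 * k) 0) as h. rewrite mult_INR in h.
  replace (INR 2) with 2 in h by (simpl; ring).
  pose proof (cos_pow_int_pos (S (S (2 * k)))) as hp. fold I0 in hp, h, d1, d2.
  pose proof (pos_INR k).
  assert (h' : cos_pow_int (2 * k) 0 - I0 = I0 / (2 * INR k + 1)).
  { apply (Rmult_eq_reg_l ((2 * INR k + 2) * (2 * INR k + 1))). 2: nra.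
    transitivity ((2 * INR k + 2) * (2 * INR k + 1) * cos_pow_int (2 * k) 0
                  - (2 * INR k + 2) * (2 * INR k + 1) * I0). ring.
    rewrite <- h. field. lra. }
  rewrite h' in d2.
  assert (E : forall y, y / I0 * I0 = y) by (intro; field; lra).
  split; apply (Rmult_le_reg_r I0); auto; rewrite E.
  - replace ((1 - 2 * (a * a) / (2 * INR k + 1)) * I0)
      with (I0 - 2 * a * (2 * a) / 2 * (I0 / (2 * INR k + 1))) by (field; lra).
    lra.
  - lra.
Qed.

Lemma is_lim_seq_sine_prod a : is_lim_seq (fun k => a * sine_prod a k) (sin (PI * a) / PI).
Proof.
  apply is_lim_seq_incr_1.
  pose proof PI_RGT_0 as HPI.
  set (r := fun k => cos_pow_int (2 * S k) (2 * a) / cos_pow_int (2 * S k) 0).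
  assert (Hr : is_lim_seq r 1).
  { apply (is_lim_seq_le_le (fun k => 1 - 2 * (a * a) / (2 * INR k + 1)) r (fun _ => 1)).
    { intro k. apply cos_pow_int_ratio_bounds. }
    2: apply is_lim_seq_const.
    replace (Finite 1) with (Finite (1 - 0)) by (f_equal; ring).
    apply is_lim_seq_minus'. apply is_lim_seq_const. apply is_lim_seq_div_affine. lra. }
  assert (Hid : forall k, a * sine_prod a (S k) * r k = sin (PI * a) / PI).
  { intro k. unfold r. pose proof (sine_prod_cos_pow_int a (S k)) as E.
    pose proof (cos_pow_int_pos (2 * S k)).
    apply (Rmult_eq_reg_r (PI * cos_pow_int (2 * S k) 0)).
    2: apply Rmult_integral_contrapositive; split; lra.
    transitivity (a * sine_prod a (S k) * cos_pow_int (2 * S k) (2 * a) * PI). field. lra.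
    rewrite E. field. lra. }
  apply is_lim_seq_ext_loc with (u := fun k => sin (PI * a) / PI * / r k).
  { apply is_lim_seq_spec in Hr. destruct (Hr (mkposreal (1 / 2) ltac:(lra))) as [N HN].
    exists N. intros n Hn. specialize (HN n Hn). simpl in HN.
    assert (r n <> 0). { intro E; rewrite E in HN. rewrite Rabs_left in HN; lra. }
    rewrite <- (Hid n). field. auto. }
  replace (Finite (sin (PI * a) / PI)) with (Rbar_mult (sin (PI * a) / PI) (Rbar_inv 1)).
  apply is_lim_seq_scal_l, is_lim_seq_inv; auto. injection; lra.
  simpl. f_equal. field. lra.
Qed.


(** * Column sums *)

Section Columns.
Variable al : R.
Hypothesis Hal : -1 < al.

Definition sine_ratio := sin (PI * al) / PI.

Definition t_coef (j m : nat) : R :=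
  (-1) ^ (m + 1) * gbinom (al + 2) m * poch (al + 3) m / INR (Factorial.fact (j + m)).

Definition u_coef (j m : nat) : R := gbinom (al + 1) (j - 1) * t_coef j m.

Definition u_sum (j : nat) : R := sine_ratio * (-1) ^ j / poch (al + 2) (S j).

Lemma t_coef_1_0 : t_coef 1 0 = -1.
Proof. unfold t_coef. simpl. rewrite gbinom_0. field. Qed.

Lemma t_coef_Sm j m : t_coef j (S m) = t_coef j m * (- ((al + 2 - INR m) * (al + 3 + INR m))
                                 / ((INR m + 1) * (INR j + INR m + 1))).
Proof.
  unfold t_coef. rewrite gbinom_S, poch_S. replace (j + S m)%nat with (S (j + m)) by lia.
  rewrite INR_fact_S, plus_INR. simpl pow.
  pose proof (fact_pos_R (j + m)). pose proof (pos_INR m). pose proof (pos_INR j).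
  field. lra.
Qed.

Lemma t_coef_Sj j m : t_coef (S j) m = t_coef j m / (INR j + INR m + 1).
Proof.
  unfold t_coef. simpl (S j + m)%nat. rewrite INR_fact_S, plus_INR.
  pose proof (fact_pos_R (j + m)). pose proof (pos_INR m). pose proof (pos_INR j).
  field. lra.
Qed.

Lemma t_coef_abs_le j m : Rabs (t_coef (S j) m) <= Rabs (t_coef 1 m).
Proof.
  induction j. lra.
  rewrite t_coef_Sj. unfold Rdiv. rewrite Rabs_mult.
  pose proof (pos_INR (S j)). pose proof (pos_INR m).
  rewrite Rabs_inv, (Rabs_right (INR (S j) + INR m + 1)) by lra.
  apply Rle_trans with (Rabs (t_coef (S j) m) * 1); [|lra].
  apply Rmult_le_compat_l. apply Rabs_pos.
  rewrite <- Rinv_1. apply Rinv_le_contravar; lra.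
Qed.

Lemma sumlt_t_coef_1 M :
  sumlt M (t_coef 1) = - (INR M * (INR M + 1) * t_coef 1 M) / ((al + 2) * (al + 3)).
Proof.
  assert (0 < (al + 2) * (al + 3)) by nra.
  induction M.
  - simpl. field. lra.
  - rewrite sumlt_S, IHM, t_coef_Sm, S_INR. pose proof (pos_INR M).
    simpl (INR 1). field. split; lra.
Qed.

Lemma sumlt_t_coef_gosper j M : (1 <= j)%nat ->
  sumlt M (fun m => t_coef j m *
             (((al + INR j + 3) * (al + 2 - INR j) + INR j * (INR j + INR m + 1))
              / (INR j * (INR j + INR m + 1))))
  = - (INR M / INR j) * t_coef j M.
Proof.
  intros Hj. assert (1 <= INR j) by (replace 1 with (INR 1) by reflexivity; apply le_INR; auto).
  induction M.
  - simpl. field. lra.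
  - rewrite sumlt_S, IHM, t_coef_Sm, S_INR. pose proof (pos_INR M).
    field. split; lra.
Qed.

Definition t1_scaled M := INR M * (INR M + 1) * t_coef 1 M.

Definition t1_scaled_factor k :=
  (INR k + 1 + al) * (INR k + 2 + al) * (INR k + 3 + al) * (INR k + 4 + al) * (INR k + 5 + al)
  / ((INR k + 1) ^ 2 * (INR k + 2) ^ 2 * (INR k + 3)).

Lemma t1_scaled_sine_prod k : t1_scaled (S (S (S k))) = al * sine_prod al k * t1_scaled_factor k.
Proof.
  induction k.
  - unfold t1_scaled, t1_scaled_factor.
    rewrite (t_coef_Sm 1 2), (t_coef_Sm 1 1), (t_coef_Sm 1 0), t_coef_1_0. simpl. field.
  - assert (E : t1_scaled (S (S (S (S k)))) = t1_scaled (S (S (S k))) *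
       ((INR k + 1 - al) * (INR k + 6 + al) / ((INR k + 3) * (INR k + 4)))).
    { unfold t1_scaled. rewrite (t_coef_Sm 1 (S (S (S k)))). rewrite !S_INR. simpl (INR 1).
      pose proof (pos_INR k). rewrite ?INR_0. field. lra. }
    rewrite E, IHk, sine_prod_S. unfold t1_scaled_factor. rewrite !S_INR, ?INR_0.
    pose proof (pos_INR k). field. lra.
Qed.

Lemma is_lim_seq_t1_scaled_factor : is_lim_seq t1_scaled_factor 1.
Proof.
  assert (F : forall c d, 0 < d -> is_lim_seq (fun k => (INR k + c) / (INR k + d)) 1).
  { intros c d Hd. apply is_lim_seq_ext with (u := fun k => 1 + (c - d) / (1 * INR k + d)).
    { intro k. pose proof (pos_INR k). field. lra. }
    replace (Finite 1) with (Finite (1 + 0)) by (f_equal; ring).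
    apply is_lim_seq_plus'. apply is_lim_seq_const. apply is_lim_seq_div_affine. lra. }
  apply is_lim_seq_ext with (u := fun k =>
     (INR k + (1 + al)) / (INR k + 1) * ((INR k + (2 + al)) / (INR k + 1)) *
     ((INR k + (3 + al)) / (INR k + 2)) * ((INR k + (4 + al)) / (INR k + 2)) *
     ((INR k + (5 + al)) / (INR k + 3))).
  { intro k. unfold t1_scaled_factor. pose proof (pos_INR k). field. lra. }
  replace (Finite 1) with (Finite (1 * 1 * 1 * 1 * 1)) by (f_equal; ring).
  repeat apply is_lim_seq_mult'; apply F; lra.
Qed.

Lemma is_lim_seq_t1_scaled : is_lim_seq t1_scaled sine_ratio.
Proof.
  apply (is_lim_seq_incr_n _ 3).
  apply is_lim_seq_ext with (u := fun k => al * sine_prod al k * t1_scaled_factor k).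
  { intro k. replace (k + 3)%nat with (S (S (S k))) by lia. symmetry. apply t1_scaled_sine_prod. }
  replace (Finite sine_ratio) with (Finite (sine_ratio * 1)) by (f_equal; ring).
  apply is_lim_seq_mult'. apply is_lim_seq_sine_prod. apply is_lim_seq_t1_scaled_factor.
Qed.

Lemma is_series_t_coef_1 : is_series (t_coef 1) (- sine_ratio / ((al + 2) * (al + 3))).
Proof.
  assert (0 < (al + 2) * (al + 3)) by nra.
  apply is_series_of_lim_seq.
  apply is_lim_seq_ext with (u := fun n => - t1_scaled (S n) / ((al + 2) * (al + 3))).
  { intro n. rewrite sum_n_sumlt, sumlt_t_coef_1. reflexivity. }
  apply is_lim_seq_div'. apply (is_lim_seq_opp _ sine_ratio).
  apply -> (is_lim_seq_incr_1 t1_scaled). apply is_lim_seq_t1_scaled.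
  apply is_lim_seq_const. lra.
Qed.

Lemma is_lim_seq_mul_t_coef j : is_lim_seq (fun M => INR M * t_coef (S j) M) 0.
Proof.
  apply is_lim_seq_abs_0.
  apply (is_lim_seq_le_le (fun _ => 0) _ (fun M => Rabs (t1_scaled M * (1 / (1 * INR M + 1))))).
  { intro M. split. apply Rabs_pos. pose proof (pos_INR M).
    unfold t1_scaled. rewrite !Rabs_mult.
    rewrite (Rabs_right (INR M)), (Rabs_right (INR M + 1)) by lra.
    rewrite (Rabs_right (1 / (1 * INR M + 1))).
    2: { apply Rle_ge. apply Rlt_le. apply Rdiv_lt_0_compat; lra. }
    replace (INR M * (INR M + 1) * Rabs (t_coef 1 M) * (1 / (1 * INR M + 1)))
      with (INR M * Rabs (t_coef 1 M)) by (field; lra).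
    apply Rmult_le_compat_l. lra. apply t_coef_abs_le. }
  apply is_lim_seq_const.
  apply -> is_lim_seq_abs_0.
  replace (Finite 0) with (Finite (sine_ratio * 0)) by (f_equal; ring).
  apply is_lim_seq_mult'. apply is_lim_seq_t1_scaled. apply is_lim_seq_div_affine. lra.
Qed.

Lemma u_coef_pair j m : (al + INR (S j) + 3) * u_coef (S (S j)) m + u_coef (S j) m =
  gbinom (al + 1) j * (t_coef (S j) m *
    (((al + INR (S j) + 3) * (al + 2 - INR (S j)) + INR (S j) * (INR (S j) + INR m + 1))
     / (INR (S j) * (INR (S j) + INR m + 1)))).
Proof.
  unfold u_coef. replace (S (S j) - 1)%nat with (S j) by lia. replace (S j - 1)%nat with j by lia.
  rewrite gbinom_S, (t_coef_Sj (S j) m). rewrite !S_INR.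
  pose proof (pos_INR j). pose proof (pos_INR m).
  field. lra.
Qed.

Lemma is_series_u_coef_pair j :
  is_series (fun m => (al + INR (S j) + 3) * u_coef (S (S j)) m + u_coef (S j) m) 0.
Proof.
  pose proof (pos_INR j) as Hj. apply is_series_of_lim_seq.
  apply is_lim_seq_ext with
    (u := fun n => gbinom (al + 1) j * (- (INR (S n) * t_coef (S j) (S n)) / INR (S j))).
  { intro n. rewrite sum_n_sumlt.
    rewrite (sumlt_ext _ _ _ (fun m => u_coef_pair j m)), sumlt_scal, sumlt_t_coef_gosper by lia.
    field. apply not_0_INR. lia. }
  replace (Finite 0) with (Finite (gbinom (al + 1) j * (- 0 / INR (S j)))).
  2: { f_equal. rewrite S_INR. field. lra. }
  apply (is_lim_seq_scal_l _ (gbinom (al + 1) j) (Finite (- 0 / INR (S j)))).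
  apply is_lim_seq_div'. apply (is_lim_seq_opp _ 0).
  apply -> (is_lim_seq_incr_1 (fun M => INR M * t_coef (S j) M)). apply is_lim_seq_mul_t_coef.
  apply is_lim_seq_const. rewrite S_INR. lra.
Qed.

Lemma is_series_u_coef j : is_series (u_coef (S j)) (u_sum (S j)).
Proof.
  induction j.
  - apply (is_series_ext (t_coef 1)).
    { intro m. unfold u_coef. simpl (1 - 1)%nat. rewrite gbinom_0. rring. }
    replace (u_sum 1) with (- sine_ratio / ((al + 2) * (al + 3))). apply is_series_t_coef_1.
    unfold u_sum. simpl. field. lra.
  - set (c := al + INR (S j) + 3).
    assert (Hc : 0 < c) by (unfold c; pose proof (pos_INR (S j)); lra).
    set (v := fun m => c * u_coef (S (S j)) m + u_coef (S j) m).
    assert (H : is_series (fun n => / c * (v n - u_coef (S j) n)) (/ c * (0 - u_sum (S j)))).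
    { apply (is_series_scal (/ c) (fun n => v n - u_coef (S j) n)).
      apply (is_series_minus v (u_coef (S j))); auto. apply is_series_u_coef_pair. }
    apply (is_series_ext _ _ _ (fun n => ltac:(unfold v; field; lra) :
       / c * (v n - u_coef (S j) n) = u_coef (S (S j)) n)) in H.
    replace (u_sum (S (S j))) with (/ c * (0 - u_sum (S j))). exact H.
    unfold u_sum, c. rewrite (poch_S _ (S (S j))), !S_INR.
    pose proof (poch_pos (al + 2) (S (S j)) ltac:(lra)). pose proof (pos_INR j). simpl pow.
    field. lra.
Qed.

End Columns.


(** * Summing the double series by columns *)

Lemma a_coef_u_coef al i x : a_coef al i x = sum1 i (fun j => x ^ j * u_coef al j (i - j)).
Proof.
  unfold a_coef. rewrite <- sum1_scal. apply sum1_ext. intros j Hj.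
  unfold u_coef, t_coef. replace (j + (i - j))%nat with i by lia.
  replace (i + j + 1)%nat with ((i - j + 1) + 2 * j)%nat by lia. rewrite pow_m1_add.
  field. apply not_0_INR, Factorial.fact_neq_0.
Qed.

Lemma sum1_a_coef_columns al x N :
  sum1 N (fun i => a_coef al i x) = sum1 N (fun j => x ^ j * sumlt (S (N - j)) (u_coef al j)).
Proof.
  induction N.
  - reflexivity.
  - rewrite sum1_S, IHN, a_coef_u_coef, !sum1_S.
    replace (S N - S N)%nat with 0%nat by lia. simpl (sumlt 1 _).
    transitivity (sum1 N (fun j => x ^ j * sumlt (S (N - j)) (u_coef al j)
                                    + x ^ j * u_coef al j (S N - j))
                  + x ^ S N * u_coef al (S N) 0).
    { rewrite sum1_plus. ring. }
    f_equal. 2: ring.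
    apply sum1_ext. intros j Hj. replace (S N - j)%nat with (S (N - j)) by lia.
    rewrite (sumlt_S (S (N - j))). ring.
Qed.

Lemma t1_scaled_bounded al : exists B, 0 <= B /\ forall n, Rabs (t1_scaled al n) <= B.
Proof.
  assert (H : exists l, filterlim (t1_scaled al) eventually (locally l)).
  { exists (sine_ratio al). apply is_lim_seq_t1_scaled. }
  destruct (filterlim_bounded _ H) as [B HB].
  exists B. split. eapply Rle_trans. 2: apply (HB 0%nat). apply Rabs_pos.
  intro n. apply (HB n).
Qed.

Section Tails.
Variable al : R.
Hypothesis Hal : -1 < al.
Variable B : R.
Hypothesis HB0 : 0 <= B.
Hypothesis HB : forall n, Rabs (t1_scaled al n) <= B.

Lemma t_coef_abs_le_fact j m :
  Rabs (t_coef al (S j) m) <= Rabs (t_coef al 1 m) / INR (Factorial.fact (S j)).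
Proof.
  induction j.
  - simpl. unfold Rdiv. rewrite Rinv_1. lra.
  - rewrite t_coef_Sj. unfold Rdiv. rewrite Rabs_mult, Rabs_inv.
    pose proof (pos_INR (S j)). pose proof (pos_INR m).
    rewrite (Rabs_right (INR (S j) + INR m + 1)) by lra.
    rewrite (INR_fact_S (S j)). pose proof (fact_pos_R (S j)).
    apply Rle_trans with (Rabs (t_coef al 1 m) / INR (Factorial.fact (S j))
                          * / (INR (S j) + INR m + 1)).
    apply Rmult_le_compat_r. apply Rlt_le, Rinv_0_lt_compat; lra. exact IHj.
    pose proof (Rabs_pos (t_coef al 1 m)).
    replace (Rabs (t_coef al 1 m) * / ((INR (S j) + 1) * INR (Factorial.fact (S j))))
      with (Rabs (t_coef al 1 m) / INR (Factorial.fact (S j)) * / (INR (S j) + 1))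
      by (field; lra).
    apply Rmult_le_compat_l. apply Rmult_le_pos; auto. apply Rlt_le, Rinv_0_lt_compat; lra.
    apply Rinv_le_contravar; lra.
Qed.

Lemma t_coef_1_abs_le m : (1 <= m)%nat -> Rabs (t_coef al 1 m) <= B / (INR m * (INR m + 1)).
Proof.
  intros Hm. assert (1 <= INR m) by (replace 1 with (INR 1) by reflexivity; apply le_INR; auto).
  specialize (HB m). unfold t1_scaled in HB.
  rewrite !Rabs_mult, (Rabs_right (INR m)), (Rabs_right (INR m + 1)) in HB by lra.
  apply Rmult_le_reg_l with (INR m * (INR m + 1)). nra.
  replace (INR m * (INR m + 1) * (B / (INR m * (INR m + 1)))) with B by (field; lra). lra.
Qed.

Definition col_bound j := (al + 2) ^ j * B / INR (Factorial.fact (S j)).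

Lemma col_bound_nonneg j : 0 <= col_bound j.
Proof.
  unfold col_bound. apply Rmult_le_pos. apply Rmult_le_pos; auto. apply pow_le; lra.
  apply Rlt_le, Rinv_0_lt_compat, fact_pos_R.
Qed.

Lemma u_coef_abs_le j m : (1 <= m)%nat ->
  Rabs (u_coef al (S j) m) <= col_bound j / (INR m * (INR m + 1)).
Proof.
  intros Hm. assert (1 <= INR m) by (replace 1 with (INR 1) by reflexivity; apply le_INR; auto).
  unfold u_coef. replace (S j - 1)%nat with j by lia. rewrite Rabs_mult.
  pose proof (gbinom_abs_le (al + 1) j) as Hg. rewrite (Rabs_right (al + 1)) in Hg by lra.
  replace (al + 1 + 1) with (al + 2) in Hg by ring.
  pose proof (t_coef_abs_le_fact j m). pose proof (t_coef_1_abs_le m Hm).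
  pose proof (fact_pos_R (S j)).
  unfold col_bound.
  apply Rle_trans with ((al + 2) ^ j * (B / (INR m * (INR m + 1)) / INR (Factorial.fact (S j)))).
  apply Rmult_le_compat; try apply Rabs_pos; auto.
  eapply Rle_trans. eassumption. unfold Rdiv.
  apply Rmult_le_compat_r. apply Rlt_le, Rinv_0_lt_compat; lra. assumption.
  right. field. nra.
Qed.

Lemma sumlt_u_coef_diff_le j M d :
  Rabs (sumlt (S (M + d)) (u_coef al (S j)) - sumlt (S M) (u_coef al (S j)))
  <= col_bound j * (1 / (INR M + 1) - 1 / (INR (M + d) + 1)).
Proof.
  pose proof (col_bound_nonneg j).
  induction d.
  - rewrite Nat.add_0_r, !Rminus_diag, Rmult_0_r, Rabs_R0. lra.
  - replace (S (M + S d)) with (S (S (M + d))) by lia. rewrite sumlt_S.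
    pose proof (u_coef_abs_le j (S (M + d)) ltac:(lia)).
    replace (sumlt (S (M + d)) (u_coef al (S j)) + u_coef al (S j) (S (M + d))
             - sumlt (S M) (u_coef al (S j)))
      with ((sumlt (S (M + d)) (u_coef al (S j)) - sumlt (S M) (u_coef al (S j)))
            + u_coef al (S j) (S (M + d))) by ring.
    eapply Rle_trans. apply Rabs_triang.
    replace (M + S d)%nat with (S (M + d)) by lia.
    rewrite S_INR in *. pose proof (pos_INR (M + d)). pose proof (pos_INR M).
    replace (col_bound j * (1 / (INR M + 1) - 1 / (INR (M + d) + 1 + 1)))
      with (col_bound j * (1 / (INR M + 1) - 1 / (INR (M + d) + 1))
            + col_bound j / ((INR (M + d) + 1) * (INR (M + d) + 1 + 1)))
      by (field; lra).
    lra.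
Qed.

Lemma u_sum_tail_le j M :
  Rabs (u_sum al (S j) - sumlt (S M) (u_coef al (S j))) <= col_bound j / (INR M + 1).
Proof.
  pose proof (col_bound_nonneg j).
  apply (is_lim_seq_abs_le
           (fun n => sumlt (S n) (u_coef al (S j)) - sumlt (S M) (u_coef al (S j))) _ _ M).
  - apply is_lim_seq_minus'. 2: apply is_lim_seq_const.
    apply is_lim_seq_ext with (u := sum_n (u_coef al (S j))). intro; apply sum_n_sumlt.
    apply (is_series_u_coef al Hal j).
  - intros n Hn. replace n with (M + (n - M))%nat by lia.
    eapply Rle_trans. apply sumlt_u_coef_diff_le.
    pose proof (pos_INR M). pose proof (pos_INR (M + (n - M))).
    assert (0 <= 1 / (INR (M + (n - M)) + 1)) by (apply Rlt_le, Rdiv_lt_0_compat; lra).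
    replace (col_bound j / (INR M + 1)) with (col_bound j * (1 / (INR M + 1))) by (field; lra).
    apply Rmult_le_compat_l; lra.
Qed.

Definition swap_error x N :=
  sum1 N (fun j => x ^ j * (u_sum al j - sumlt (S (N - j)) (u_coef al j))).

(* The tail of column j after N - j terms is O(1/(N - j)), and
   1/(N - j + 1) <= 2^j/(N + 1) trades the loss near the diagonal for a factor 2^j. *)
Lemma swap_error_term_le x N j : (S j <= N)%nat ->
  Rabs (x ^ S j * (u_sum al (S j) - sumlt (S (N - S j)) (u_coef al (S j))))
  <= B / (al + 2) / (INR N + 1)
     * ((2 * Rabs x * (al + 2)) ^ S j / INR (Factorial.fact (S j))).
Proof.
  intros Hj.
  rewrite Rabs_mult, <- RPow_abs.
  pose proof (u_sum_tail_le j (N - S j)) as T.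
  rewrite minus_INR in T by lia.
  pose proof (pos_INR N). pose proof (pos_INR j). rewrite S_INR in *.
  pose proof (pow2_ge (S j)) as H2. rewrite S_INR in H2.
  assert (HjN : INR (S j) <= INR N) by (apply le_INR; lia). rewrite S_INR in HjN.
  apply Rle_trans with (Rabs x ^ S j * (col_bound j / (INR N - (INR j + 1) + 1))).
  { apply Rmult_le_compat_l. apply pow_le, Rabs_pos. exact T. }
  pose proof (fact_pos_R (S j)).
  replace (B / (al + 2) / (INR N + 1)
           * ((2 * Rabs x * (al + 2)) ^ S j / INR (Factorial.fact (S j))))
    with (Rabs x ^ S j * (col_bound j * (2 ^ S j / (INR N + 1)))).
  2: { unfold col_bound. rewrite !Rpow_mult_distr. simpl pow. field. lra. }
  apply Rmult_le_compat_l. apply pow_le, Rabs_pos.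
  pose proof (col_bound_nonneg j).
  unfold Rdiv. apply Rmult_le_compat_l; auto.
  apply Rmult_le_reg_l with ((INR N - (INR j + 1) + 1) * (INR N + 1)). nra.
  field_simplify; try lra.
  assert (0 <= (INR j + 1) * (INR N - (INR j + 1))) by nra.
  nra.
Qed.

Lemma swap_error_abs_le x N :
  Rabs (swap_error x N) <= B / (al + 2) * exp (2 * Rabs x * (al + 2)) / (INR N + 1).
Proof.
  unfold swap_error. eapply Rle_trans. apply sum1_abs.
  apply Rle_trans with (sum1 N (fun j => B / (al + 2) / (INR N + 1) *
                          ((2 * Rabs x * (al + 2)) ^ j / INR (Factorial.fact j)))).
  - apply sum1_le. intros [|j] Hj. lia. apply swap_error_term_le. lia.
  - rewrite sum1_scal. pose proof (pos_INR N).
    assert (0 <= B / (al + 2) / (INR N + 1)).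
    { apply Rmult_le_pos. apply Rmult_le_pos; auto. apply Rlt_le, Rinv_0_lt_compat; lra.
      apply Rlt_le, Rinv_0_lt_compat; lra. }
    pose proof (sum1_exp_le (2 * Rabs x * (al + 2)) N ltac:(pose proof (Rabs_pos x); nra)).
    apply Rle_trans with (B / (al + 2) / (INR N + 1) * exp (2 * Rabs x * (al + 2))).
    apply Rmult_le_compat_l; auto. right. field. lra.
Qed.

End Tails.

Lemma is_series_hyp1F1_1 b x : 1 <= b ->
  is_series (fun k => x ^ k / poch b k) (hyp1F1 1 b x).
Proof.
  intros Hb.
  assert (Hex : ex_series (fun k => x ^ k / poch b k)).
  { apply (@ex_series_le R_AbsRing R_CompleteNormedModule _
             (fun k => Rabs x ^ k / INR (Factorial.fact k))).
    - intro n. change (norm (x ^ n / poch b n)) with (Rabs (x ^ n / poch b n)).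
      pose proof (poch_ge_fact b n Hb). pose proof (fact_pos_R n).
      unfold Rdiv. rewrite Rabs_mult, <- RPow_abs, Rabs_inv, (Rabs_right (poch _ _)) by lra.
      apply Rmult_le_compat_l. apply pow_le, Rabs_pos. apply Rinv_le_contravar; lra.
    - exists (exp (Rabs x)). exact (is_exp_Reals (Rabs x)). }
  unfold hyp1F1.
  rewrite (Series_ext _ (fun k => x ^ k / poch b k)).
  apply Series_correct; auto.
  intro n. rewrite poch1. pose proof (fact_pos_R n). pose proof (poch_ge_fact b n Hb).
  field. lra.
Qed.

Lemma is_series_u_sum al x : -1 < al ->
  is_series (fun i => x ^ S i * u_sum al (S i))
    (- (sin (PI * al) / PI) * (x / ((al + 2) * (al + 3))) * hyp1F1 1 (al + 4) (- x)).
Proof.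
  intros Hal.
  pose proof (is_series_hyp1F1_1 (al + 4) (- x) ltac:(lra)) as H.
  set (c := - (sin (PI * al) / PI) * (x / ((al + 2) * (al + 3)))).
  apply (is_series_scal_l c) in H.
  eapply is_series_ext. 2: exact H.
  intro n. unfold scal; simpl; unfold mult; simpl. unfold c, u_sum, sine_ratio.
  rewrite (poch_shift (al + 2) (S n)), (poch_shift (al + 2 + 1) n).
  replace (al + 2 + 1 + 1) with (al + 4) by ring.
  pose proof (poch_pos (al + 4) n ltac:(lra)).
  rewrite pow_opp_m1. simpl pow. pose proof PI_RGT_0. field. repeat split; lra.
Qed.

Theorem is_series_a_coef al x : -1 < al ->
  is_series (fun i => a_coef al (S i) x)
    (- (sin (PI * al) / PI) * (x / ((al + 2) * (al + 3))) * hyp1F1 1 (al + 4) (- x)).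
Proof.
  intros Hal.
  destruct (t1_scaled_bounded al) as [B [HB0 HB]].
  set (L := - (sin (PI * al) / PI) * (x / ((al + 2) * (al + 3))) * hyp1F1 1 (al + 4) (- x)).
  apply is_series_of_lim_seq.
  apply is_lim_seq_ext with
    (u := fun N => sum_n (fun i => x ^ S i * u_sum al (S i)) N - swap_error al x (S N)).
  { intro N. rewrite (sum_n_sum1 (fun j => x ^ j * u_sum al j)),
      (sum_n_sum1 (fun i => a_coef al i x)), sum1_a_coef_columns.
    unfold swap_error. rewrite <- sum1_minus. apply sum1_ext. intros j Hj. ring. }
  replace (Finite L) with (Finite (L - 0)) by (f_equal; ring).
  apply is_lim_seq_minus'. apply (is_series_u_sum al x Hal).
  apply is_lim_seq_abs_0.
  apply (is_lim_seq_le_le (fun _ => 0) _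
           (fun N => B / (al + 2) * exp (2 * Rabs x * (al + 2)) / (1 * INR N + 2))).
  { intro N. split. apply Rabs_pos. eapply Rle_trans. apply (swap_error_abs_le al Hal B HB0 HB).
    rewrite S_INR. right. f_equal. ring. }
  apply is_lim_seq_const. apply is_lim_seq_div_affine. lra.
Qed.


(** * The case of an integer parameter *)

Definition rodrigues_coef m l :=
  if ((m + 2) <=? l)%nat
  then (-1) ^ (l - (m + 2)) * gbinom (INR (m + 2)) (l - (m + 2)) else 0.

Definition col_coef m j l := if (j <=? l)%nat then t_coef (INR m) j (l - j) else 0.

Lemma rodrigues_coef_eq_0 m l : (2 * (m + 2) < l)%nat -> rodrigues_coef m l = 0.
Proof.
  intros H. unfold rodrigues_coef. destruct (Nat.leb_spec (m + 2) l); [|reflexivity].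
  rewrite gbinom_INR_gt by lia. ring.
Qed.

Lemma PSeries_rodrigues_coef m s :
  PSeries (rodrigues_coef m) s = s ^ (m + 2) * (1 - s) ^ (m + 2).
Proof.
  rewrite PSeries_decr_n_aux with (n := (m + 2)%nat).
  2: { intros k Hk. unfold rodrigues_coef. destruct (Nat.leb_spec (m + 2) k); [lia|reflexivity]. }
  f_equal.
  rewrite (PSeries_finite _ (m + 2)).
  2: { intros q Hq. unfold PS_decr_n, rodrigues_coef.
       destruct (Nat.leb_spec (m + 2) (m + 2 + q)); [|lia].
       rewrite gbinom_INR_gt by lia. ring. }
  replace (1 - s) with (- s + 1) by ring. rewrite binomial, sum_n_Reals.
  apply sum_eq. intros i Hi. unfold PS_decr_n, rodrigues_coef.
  destruct (Nat.leb_spec (m + 2) (m + 2 + i)); [|lia].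
  replace (m + 2 + i - (m + 2))%nat with i by lia.
  rewrite C_gbinom, pow1, pow_opp_m1 by auto. ring.
Qed.

Lemma col_coef_eq_0 m j l : (j + (m + 2) < l)%nat -> col_coef m j l = 0.
Proof.
  intros H. unfold col_coef. destruct (Nat.leb_spec j l); [|reflexivity].
  unfold t_coef. replace (INR m + 2) with (INR (m + 2)) by (rewrite plus_INR; simpl; ring).
  rewrite gbinom_INR_gt by lia. unfold Rdiv. ring.
Qed.

Lemma col_coef_PS_derive_n m j l : (1 <= j <= m + 2)%nat ->
  col_coef m j l
  = - / INR (Factorial.fact (m + 2)) * PS_derive_n ((m + 2) - j) (rodrigues_coef m) l.
Proof.
  intros Hj. unfold col_coef, rodrigues_coef, PS_derive_n.
  destruct (Nat.leb_spec j l) as [H1|H1];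
    destruct (Nat.leb_spec (m + 2) (l + (m + 2 - j))) as [H2|H2]; try lia.
  2: ring.
  replace (l + (m + 2 - j) - (m + 2))%nat with (l - j)%nat by lia.
  replace (l + (m + 2 - j))%nat with ((m + 2) + (l - j))%nat by lia.
  set (q := (l - j)%nat). replace l with (j + q)%nat by (unfold q; lia).
  unfold t_coef. rewrite <- (poch_INR_fact (m + 2) q).
  replace (INR m + 3) with (INR (m + 2) + 1) by (rewrite plus_INR; simpl; ring).
  replace (INR m + 2) with (INR (m + 2)) by (rewrite plus_INR; simpl; ring).
  rewrite pow_add. simpl pow.
  pose proof (fact_pos_R (m + 2)). pose proof (fact_pos_R (j + q)). field. lra.
Qed.

(* s^(m+2) (1-s)^(m+2) is invariant under s |-> 1 - s, and col_coef m j is the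
   power series of one of its derivatives. *)
Lemma PSeries_col_coef_reflect m j s : (1 <= j <= m + 2)%nat ->
  PSeries (col_coef m j) s = (-1) ^ (m + j) * PSeries (col_coef m j) (1 - s).
Proof.
  intros Hj.
  assert (Hr : forall t, Rbar_lt (Rabs t) (CV_radius (rodrigues_coef m)))
    by (apply (CV_radius_finite _ (2 * (m + 2))), rodrigues_coef_eq_0).
  assert (E : forall t, PSeries (col_coef m j) t = - / INR (Factorial.fact (m + 2))
                          * Derive_n (PSeries (rodrigues_coef m)) (m + 2 - j) t).
  { intro t. rewrite Derive_n_PSeries by apply Hr.
    rewrite <- PSeries_scal. apply PSeries_ext. intro l. unfold PS_scal.
    rewrite col_coef_PS_derive_n by auto. reflexivity. }
  rewrite !E.
  rewrite (Derive_n_ext (PSeries (rodrigues_coef m)) (fun t => PSeries (rodrigues_coef m) (1 - t))).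
  2: { intro t. rewrite !PSeries_rodrigues_coef. replace (1 - (1 - t)) with t by ring. ring. }
  rewrite Derive_n_comp_one_minus by (intros k y; apply ex_derive_n_PSeries, Hr).
  replace ((-1) ^ (m + 2 - j)) with ((-1) ^ (m + j)). ring.
  rewrite <- (pow_m1_add (m + 2 - j) j).
  replace (m + 2 - j + 2 * j)%nat with ((m + j) + 2 * 1)%nat by lia.
  symmetry; apply pow_m1_add.
Qed.

Lemma a_coef_col_coef m x l :
  a_coef (INR m) l x = sum1 (m + 2) (fun j => x ^ j * gbinom (INR m + 1) (j - 1) * col_coef m j l).
Proof.
  rewrite a_coef_u_coef.
  transitivity (sum1 l (fun j => x ^ j * gbinom (INR m + 1) (j - 1) * col_coef m j l)).
  { apply sum1_ext. intros j Hj. unfold u_coef, col_coef.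
    destruct (Nat.leb_spec j l); [|lia]. ring. }
  destruct (Nat.le_gt_cases l (m + 2)).
  - symmetry. apply sum1_trunc; auto. intros j Hj. unfold col_coef.
    destruct (Nat.leb_spec j l); [lia|]. ring.
  - apply sum1_trunc. lia. intros j Hj.
    replace (INR m + 1) with (INR (m + 1)) by (rewrite plus_INR; simpl; ring).
    rewrite gbinom_INR_gt by lia. ring.
Qed.

Lemma a_coef_INR_eq_0 m x l : (2 * (m + 2) < l)%nat -> a_coef (INR m) l x = 0.
Proof.
  intros H. rewrite a_coef_col_coef, (sum1_ext _ _ (fun _ => 0)).
  { clear. induction (m + 2)%nat; simpl; auto. rewrite IHn. ring. }
  intros j Hj. rewrite col_coef_eq_0 by lia. ring.
Qed.

Lemma PSeries_a_coef_columns m x s :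
  PSeries (fun l => a_coef (INR m) l x) s =
  sum1 (m + 2) (fun j => x ^ j * gbinom (INR m + 1) (j - 1) * PSeries (col_coef m j) s).
Proof.
  rewrite (PSeries_finite _ (2 * (m + 2))) by (intros; apply a_coef_INR_eq_0; auto).
  rewrite sum_n_sumlt.
  rewrite (sumlt_ext _ _ (fun l => sum1 (m + 2)
             (fun j => x ^ j * gbinom (INR m + 1) (j - 1) * (col_coef m j l * s ^ l)))).
  2: { intro l. rewrite a_coef_col_coef, Rmult_comm, <- sum1_scal. apply sum1_ext. intros; ring. }
  rewrite sumlt_sum1_swap. apply sum1_ext. intros j Hj.
  rewrite sumlt_scal. f_equal.
  rewrite (PSeries_finite _ (2 * (m + 2))), sum_n_sumlt. reflexivity.
  intros; apply col_coef_eq_0; lia.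
Qed.

Lemma PSeries_a_coef_reflect m x s :
  PSeries (fun l => a_coef (INR m) l x) s
  = (-1) ^ m * PSeries (fun l => a_coef (INR m) l (- x)) (1 - s).
Proof.
  rewrite !PSeries_a_coef_columns, <- sum1_scal. apply sum1_ext. intros j Hj.
  rewrite (PSeries_col_coef_reflect m j s), pow_opp_m1, pow_add by auto.
  ring.
Qed.

Lemma Derive_n_PSeries_a_coef_1 m x k :
  Derive_n (PSeries (fun l => a_coef (INR m) l x)) k 1
  = (-1) ^ (m + k) * (INR (Factorial.fact k) * a_coef (INR m) k (- x)).
Proof.
  assert (Ry : forall s, Rbar_lt (Rabs s) (CV_radius (fun l => a_coef (INR m) l (- x))))
    by (apply (CV_radius_finite _ (2 * (m + 2))); intros; apply a_coef_INR_eq_0; auto).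
  rewrite (Derive_n_ext _ (fun t => (-1) ^ m * PSeries (fun l => a_coef (INR m) l (- x)) (1 - t)))
    by (intro t; apply PSeries_a_coef_reflect).
  rewrite Derive_n_scal_l, Derive_n_comp_one_minus
    by (intros k0 y; apply ex_derive_n_PSeries, Ry).
  replace (1 - 1) with 0 by ring.
  rewrite Derive_n_coef, pow_add. ring.
  specialize (Ry 0). rewrite Rabs_R0 in Ry. exact Ry.
Qed.

Theorem is_series_C_a_coef m x k :
  is_series (fun j => Binomial.C (k + j) k * a_coef (INR m) (k + j) x)
            ((-1) ^ (m + k) * a_coef (INR m) k (- x)).
Proof.
  set (ax := fun l => a_coef (INR m) l x).
  set (c := PS_derive_n k ax).
  assert (Hc : forall l, (2 * (m + 2) < l)%nat -> c l = 0).
  { intros l Hl. unfold c, PS_derive_n, ax. rewrite a_coef_INR_eq_0 by lia. ring. }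
  assert (Hs : is_series c (Derive_n (PSeries ax) k 1)).
  { rewrite Derive_n_PSeries
      by (apply (CV_radius_finite _ (2 * (m + 2))); intros; apply a_coef_INR_eq_0; auto).
    rewrite (PSeries_finite _ (2 * (m + 2))) by auto.
    rewrite (sum_n_ext _ c). apply is_series_finite; auto. intro l. rewrite pow1. unfold c. rring. }
  unfold ax in Hs. rewrite Derive_n_PSeries_a_coef_1 in Hs.
  apply (is_series_scal_l (/ INR (Factorial.fact k))) in Hs.
  pose proof (fact_pos_R k).
  eapply is_series_ext. 2: { eapply (fun H => eq_ind _ (fun v => is_series _ v) Hs _ H).
    unfold scal; simpl; unfold mult; simpl. field. lra. }
  intro j. unfold scal; simpl; unfold mult; simpl. unfold c, PS_derive_n, ax, Binomial.C.
  replace (k + j - k)%nat with j by lia. rewrite (Nat.add_comm j k).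
  pose proof (fact_pos_R j). field. lra.
Qed.

Lemma is_series_a_coef_INR m x : is_series (fun i => a_coef (INR m) (S i) x) 0.
Proof.
  pose proof (is_series_a_coef (INR m) x ltac:(pose proof (pos_INR m); lra)) as H.
  rewrite sin_eq_0_1, Rdiv_0_l, Ropp_0, !Rmult_0_l in H. exact H.
  exists (Z.of_nat m). rewrite <- INR_IZR_INZ. ring.
Qed.

Lemma is_series_mul_a_coef_INR m x :
  is_series (fun i => INR (S i) * a_coef (INR m) (S i) x) ((-1) ^ (m + 1) * x).
Proof.
  pose proof (is_series_C_a_coef m x 1) as H.
  rewrite a_coef_1, Ropp_involutive in H.
  eapply is_series_ext. 2: exact H. intro j. rewrite <- C_S_1. reflexivity.
Qed.

Theorem mainTheorem1 :
  (forall (alpha x : R), -1 < alpha ->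
     is_series (fun i : nat => a_coef alpha (S i) x)
       (- (sin (PI * alpha) / PI) * (x / ((alpha + 2) * (alpha + 3)))
          * hyp1F1 1 (alpha + 4) (- x)))
  /\
  (forall (m : nat) (x : R),
     (forall k : nat, (1 <= k)%nat ->
        is_series (fun j : nat => Binomial.C (k + j) k * a_coef (INR m) (k + j) x)
          ((-1) ^ (m + k) * a_coef (INR m) k (- x)))
     /\ is_series (fun i : nat => a_coef (INR m) (S i) x) 0
     /\ is_series (fun i : nat => INR (S i) * a_coef (INR m) (S i) x)
          ((-1) ^ (m + 1) * x)).
Proof.
  split.
  - intros alpha x Hal. exact (is_series_a_coef alpha x Hal).
  - intros m x. split; [|split].
    + intros k _. apply is_series_C_a_coef.
    + apply is_series_a_coef_INR.
    + apply is_series_mul_a_coef_INR.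
Qed.
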